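(* (1) For every $\mathtt{dCBN}$ term $M$: $\mathcal T^n(M)=\mathcal T(M^n)$. (2) For every $\mathtt{dCBV}$ term $M$: $\mathcal T^v(M)=\mathcal T(M^v)$.
   Context: \textbf{dBang and translations.} $\mathtt{dBang}$ terms: $M ::= x\mid\lambda x.M\mid MN\mid M[N/x]\mid\ !M\mid\mathrm{der}\,M$. $\mathtt{dCBN}$/$\mathtt{dCBV}$ terms: $M::=x\mid\lambda x.M\mid MN\mid M[N/x]$; values $V::=x\mid\lambda x.M$; list contexts $L::=\square\mid L[N/x]$. $x^n=x$, $(\lambda x.M)^n=\lambda x.M^n$, $(MN)^n=M^n\,!N^n$, $(M[N/x])^n=M^n[!N^n/x]$. $x^v=!x$, $(\lambda x.M)^v=!(\lambda x.M^v)$, $(MN)^v=L\langle P\rangle N^v$ if $M^v=L\langle !P\rangle$ for a list context $L$, else $(MN)^v=\mathrm{der}(M^v)\,N^v$; $(M[N/x])^v=M^v[N^v/x]$. \textbf{Resource terms} $m,n::=x\mid\lambda x.m\mid mn\mid m[n/x]\mid\mathrm{der}\,m\mid[m_1,\dots,m_k]$ ($k\ge0$ multisets); resource list contexts $l::=\square\mid l[n/x]$. \textbf{dBang approximation:} $x\sqsubset x$; $\lambda x.m\sqsubset\lambda x.M$ if $m\sqsubset M$; $mn\sqsubset MN$ and $m[n/x]\sqsubset M[N/x]$ if $m\sqsubset M,n\sqsubset N$; $\mathrm{der}\,m\sqsubset\mathrm{der}\,M$ if $m\sqsubset M$; $[m_1,\dots,m_k]\sqsubset\ !M$ ($k\ge0$)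 if all $m_i\sqsubset M$. $\mathcal T(M)=\{m\mid m\sqsubset M\}$. \textbf{dCBN approximation} $\sqsubset_n$: $x\sqsubset_n x$; $\lambda x.m\sqsubset_n\lambda x.M$ if $m\sqsubset_n M$; $m[n_1,\dots,n_k]\sqsubset_n MN$ and $m[[n_1,\dots,n_k]/x]\sqsubset_n M[N/x]$ ($k\ge0$) if $m\sqsubset_n M$ and all $n_i\sqsubset_n N$. $\mathcal T^n(M)=\{m\mid m\sqsubset_n M\}$. \textbf{dCBV approximation} $\sqsubset_v$: $[x,\dots,x]\sqsubset_v x$ ($k\ge0$ copies); $[\lambda x.m_1,\dots,\lambda x.m_k]\sqsubset_v\lambda x.M$ ($k\ge0$) if all $m_i\sqsubset_v M$; $\mathrm{der}(m)\,n\sqsubset_v MN$ if $m\sqsubset_v M$, $n\sqsubset_v N$ and $M$ is not of the form $L\langle V\rangle$ with $V$ a value; $l\langle m\rangle n\sqsubset_v L\langle V\rangle N$ if $V$ is a value, $[m]\sqsubset_v V$, $n\sqsubset_v N$, and $l=\square[p_1/y_1]\cdots[p_j/y_j]$ with $L=\square[P_1/y_1]\cdots[P_j/y_j]$ and $p_i\sqsubset_v P_i$; $m[n/x]\sqsubset_v M[N/x]$ if $m\sqsubset_v M$, $n\sqsubset_v N$. $\mathcal T^v(M)=\{m\mid m\sqsubset_v M\}$. *)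

From Stdlib Require Import List.
Import ListNotations.

Inductive bterm : Type :=
| BVar : nat -> bterm
| BLam : nat -> bterm -> bterm
| BApp : bterm -> bterm -> bterm
| BES  : bterm -> nat -> bterm -> bterm   (* BES M x N = M[N/x] *)
| BBang : bterm -> bterm
| BDer : bterm -> bterm.

Inductive lterm : Type :=
| LVar : nat -> lterm
| LLam : nat -> lterm -> lterm
| LApp : lterm -> lterm -> lterm
| LES  : lterm -> nat -> lterm -> lterm.  (* LES M x N = M[N/x] *)

Definition is_value (V : lterm) : Prop :=
  match V with LVar _ | LLam _ _ => True | _ => False end.

(* Resource terms; a multiset [m1,...,mk] is represented by a list
   (all relations below are invariant under permutation of bags). *)
Inductive rterm : Type :=
| RVar : nat -> rterm
| RLam : nat -> rterm -> rterm
| RApp : rterm -> rterm -> rterm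
| RES  : rterm -> nat -> rterm -> rterm
| RDer : rterm -> rterm
| RBag : list rterm -> rterm.

(* List contexts L = □[P1/y1]...[Pj/yj] are represented by the list
   [(y1,P1); ...; (yj,Pj)] (innermost substitution first). *)
Definition bplug (P : bterm) (L : list (nat * bterm)) : bterm :=
  fold_left (fun acc yN => BES acc (fst yN) (snd yN)) L P.
Definition lplug (P : lterm) (L : list (nat * lterm)) : lterm :=
  fold_left (fun acc yN => LES acc (fst yN) (snd yN)) L P.
Definition rplug (p : rterm) (l : list (nat * rterm)) : rterm :=
  fold_left (fun acc yN => RES acc (fst yN) (snd yN)) l p.

(* Decomposition M = L<!P>, if any (it is unique). *)
Fixpoint peel_bang (M : bterm) : option (bterm * list (nat * bterm)) :=
  match M with
  | BBang P => Some (P, [])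
  | BES M' x N =>
      match peel_bang M' with
      | Some (P, L) => Some (P, L ++ [(x, N)])
      | None => None
      end
  | _ => None
  end.

Fixpoint cbn_tr (M : lterm) : bterm :=
  match M with
  | LVar x => BVar x
  | LLam x M => BLam x (cbn_tr M)
  | LApp M N => BApp (cbn_tr M) (BBang (cbn_tr N))
  | LES M x N => BES (cbn_tr M) x (BBang (cbn_tr N))
  end.

Fixpoint cbv_tr (M : lterm) : bterm :=
  match M with
  | LVar x => BBang (BVar x)
  | LLam x M => BBang (BLam x (cbv_tr M))
  | LApp M N =>
      match peel_bang (cbv_tr M) with
      | Some (P, L) => BApp (bplug P L) (cbv_tr N)
      | None => BApp (BDer (cbv_tr M)) (cbv_tr N)
      end
  | LES M x N => BES (cbv_tr M) x (cbv_tr N)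
  end.

Inductive approx : rterm -> bterm -> Prop :=
| ap_var : forall x, approx (RVar x) (BVar x)
| ap_lam : forall x m M, approx m M -> approx (RLam x m) (BLam x M)
| ap_app : forall m n M N, approx m M -> approx n N -> approx (RApp m n) (BApp M N)
| ap_es : forall m n x M N, approx m M -> approx n N -> approx (RES m x n) (BES M x N)
| ap_der : forall m M, approx m M -> approx (RDer m) (BDer M)
| ap_bang : forall ms M, (forall m, In m ms -> approx m M) -> approx (RBag ms) (BBang M).

Definition T (M : bterm) : rterm -> Prop := fun m => approx m M.

Inductive approx_n : rterm -> lterm -> Prop :=
| apn_var : forall x, approx_n (RVar x) (LVar x)
| apn_lam : forall x m M, approx_n m M -> approx_n (RLam x m) (LLam x M)
| apn_app : forall m ns M N, approx_n m M -> (forall n, In n ns -> approx_n n N) ->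
    approx_n (RApp m (RBag ns)) (LApp M N)
| apn_es : forall m ns x M N, approx_n m M -> (forall n, In n ns -> approx_n n N) ->
    approx_n (RES m x (RBag ns)) (LES M x N).

Definition Tn (M : lterm) : rterm -> Prop := fun m => approx_n m M.

Inductive approx_v : rterm -> lterm -> Prop :=
| apv_var : forall x ms, (forall m, In m ms -> m = RVar x) -> approx_v (RBag ms) (LVar x)
| apv_lam : forall x ms M,
    (forall m, In m ms -> exists m', m = RLam x m' /\ approx_v m' M) ->
    approx_v (RBag ms) (LLam x M)
| apv_app_der : forall m n M N, approx_v m M -> approx_v n N ->
    ~ (exists V L, is_value V /\ M = lplug V L) ->
    approx_v (RApp (RDer m) n) (LApp M N)
| apv_app_ctx : forall m n l V L N, is_value V -> approx_v (RBag [m]) V ->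
    approx_v n N -> approx_v_ctx l L ->
    approx_v (RApp (rplug m l) n) (LApp (lplug V L) N)
| apv_es : forall m n x M N, approx_v m M -> approx_v n N ->
    approx_v (RES m x n) (LES M x N)
with approx_v_ctx : list (nat * rterm) -> list (nat * lterm) -> Prop :=
| apvc_nil : approx_v_ctx [] []
| apvc_cons : forall y p P l L, approx_v p P -> approx_v_ctx l L ->
    approx_v_ctx ((y, p) :: l) ((y, P) :: L).

Definition Tv (M : lterm) : rterm -> Prop := fun m => approx_v m M.

(* Both translations commute with approximation constructor by constructor: a
   bag [m1,...,mk] approximates !M exactly when each mi approximates M, which
   is how ⊏_n treats arguments and ⊏_v treats values.  The only delicate case
   is a CBV application whose function part is L<V> with V a value: the
   translation then removes the outer ! of V^v from under the list context,
   and correspondingly ⊏_v asks [m] ⊏_v V for a single m and approximates the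
   context pointwise.  Since V and the terms of L are not immediate subterms
   of L<V> N, the CBV part goes by induction on the size of terms. *)

From Stdlib Require Import List Lia Wf_nat.
Import ListNotations.

Lemma approx_BBang m M :
  approx m (BBang M) <-> exists ms, m = RBag ms /\ forall n, In n ms -> approx n M.
Proof.
  split.
  - intro H; inversion H; subst; eauto.
  - intros (ms & -> & Hms); constructor; exact Hms.
Qed.

Lemma approx_n_cbn_tr M m : approx_n m M <-> approx m (cbn_tr M).
Proof.
  revert m; induction M as [x | x M IH | M IHM N IHN | M IHM x N IHN]; intro m;
    simpl; split; intro H.
  - inversion H; constructor.
  - inversion H; constructor.
  - inversion H; subst; constructor; apply IH; assumption.
  - inversion H; subst; constructor; apply IH; assumption.
  - inversion H as [| | m1 ns M1 N1 Hm Hns |]; subst.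
    constructor; [apply IHM; assumption |].
    apply approx_BBang; exists ns; split; [reflexivity |].
    intros n Hn; apply IHN, Hns, Hn.
  - inversion H as [| | m1 n1 M1 N1 Hm Hn | | |]; subst.
    apply approx_BBang in Hn as (ns & -> & Hns).
    constructor; [apply IHM; assumption |].
    intros n Hin; apply IHN, Hns, Hin.
  - inversion H as [| | | m1 ns y M1 N1 Hm Hns]; subst.
    constructor; [apply IHM; assumption |].
    apply approx_BBang; exists ns; split; [reflexivity |].
    intros n Hn; apply IHN, Hns, Hn.
  - inversion H as [| | | m1 n1 y M1 N1 Hm Hn | |]; subst.
    apply approx_BBang in Hn as (ns & -> & Hns).
    constructor; [apply IHM; assumption |].
    intros n Hin; apply IHN, Hns, Hin.
Qed.

Definition cbv_tr_ctx (L : list (nat * lterm)) : list (nat * bterm) :=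
  map (fun yP => (fst yP, cbv_tr (snd yP))) L.

Definition approx_ctx (l : list (nat * rterm)) (L : list (nat * bterm)) : Prop :=
  Forall2 (fun yp yP => fst yp = fst yP /\ approx (snd yp) (snd yP)) l L.

Lemma cbv_tr_lplug L M : cbv_tr (lplug M L) = bplug (cbv_tr M) (cbv_tr_ctx L).
Proof.
  revert M; induction L as [| [y N] L IH]; intro M; [reflexivity |].
  exact (IH (LES M y N)).
Qed.

Lemma peel_bang_bplug L B :
  peel_bang (bplug B L) =
  match peel_bang B with Some (P, L0) => Some (P, L0 ++ L) | None => None end.
Proof.
  revert B; induction L as [| [y N] L IH]; intro B; simpl.
  - destruct (peel_bang B) as [[P L0] |]; [rewrite app_nil_r |]; reflexivity.
  - unfold bplug in *; simpl; rewrite IH; simpl.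
    destruct (peel_bang B) as [[P L0] |]; [rewrite <- app_assoc |]; reflexivity.
Qed.

Lemma approx_bplug L B m :
  approx m (bplug B L) <-> exists q l, m = rplug q l /\ approx q B /\ approx_ctx l L.
Proof.
  revert B m; induction L as [| [y N] L IH]; intros B m.
  - split.
    + intro H; exists m, []; repeat constructor; assumption.
    + intros (q & l & -> & Hq & Hl); inversion Hl; exact Hq.
  - change (approx m (bplug (BES B y N) L) <->
            exists q l, m = rplug q l /\ approx q B /\ approx_ctx l ((y, N) :: L)).
    rewrite IH; split.
    + intros (q & l & -> & Hq & Hl).
      inversion Hq as [| | | q0 n0 y0 B0 N0 Hq0 Hn0 | |]; subst.
      exists q0, ((y, n0) :: l); repeat split; try constructor; auto.
    + intros (q & l & -> & Hq & Hl).
      inversion Hl as [| [y' p] yP l' L' [Hy Hp] Hl']; subst; simpl in Hy, Hp; subst.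
      exists (RES q y p), l'; repeat split; try constructor; auto.
Qed.

Lemma cbv_tr_value V : is_value V -> exists P, cbv_tr V = BBang P.
Proof. destruct V; simpl; try contradiction; eauto. Qed.

Lemma peel_bang_cbv_tr_Some M P L' :
  peel_bang (cbv_tr M) = Some (P, L') ->
  exists V L, is_value V /\ M = lplug V L /\ cbv_tr V = BBang P /\ L' = cbv_tr_ctx L.
Proof.
  revert P L'; induction M as [x | x M IH | M IHM N IHN | M IHM x N IHN];
    intros P L' H; simpl in H.
  - injection H as <- <-; exists (LVar x), []; simpl; auto.
  - injection H as <- <-; exists (LLam x M), []; simpl; auto.
  - destruct (peel_bang (cbv_tr M)) as [[? ?] |]; discriminate.
  - destruct (peel_bang (cbv_tr M)) as [[P0 L0] |]; [| discriminate].
    injection H as <- <-.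
    destruct (IHM _ _ eq_refl) as (V & L & Hv & -> & HP & ->).
    exists V, (L ++ [(x, N)]); repeat split; auto.
    + unfold lplug; rewrite fold_left_app; reflexivity.
    + unfold cbv_tr_ctx; rewrite map_app; reflexivity.
Qed.

Lemma peel_bang_cbv_tr_None M :
  peel_bang (cbv_tr M) = None <-> ~ exists V L, is_value V /\ M = lplug V L.
Proof.
  split.
  - intros H (V & L & Hv & ->).
    rewrite cbv_tr_lplug, peel_bang_bplug in H.
    destruct V; simpl in *; try contradiction; discriminate.
  - intro Hnot; destruct (peel_bang (cbv_tr M)) as [[P L'] |] eqn:E; [| reflexivity].
    destruct (peel_bang_cbv_tr_Some _ _ _ E) as (V & L & Hv & -> & _).
    exfalso; eauto.
Qed.

Fixpoint lsize (M : lterm) : nat :=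
  match M with
  | LVar _ => 1
  | LLam _ M => S (lsize M)
  | LApp M N | LES M _ N => S (lsize M + lsize N)
  end.

Lemma lsize_lplug L M :
  lsize M <= lsize (lplug M L) /\
  forall y P, In (y, P) L -> lsize P < lsize (lplug M L).
Proof.
  revert M; induction L as [| [y N] L IH]; intro M; simpl.
  - split; [constructor | contradiction].
  - destruct (IH (LES M y N)) as [HM HL]; simpl in HM.
    split; [lia |].
    intros y' P [E | Hin]; [injection E as <- <-; lia | exact (HL _ _ Hin)].
Qed.

Definition cbv_approx_agree (M : lterm) : Prop := forall m, approx_v m M <-> approx m (cbv_tr M).

Lemma approx_v_ctx_cbv_tr_ctx L l :
  (forall y P, In (y, P) L -> cbv_approx_agree P) ->
  approx_v_ctx l L <-> approx_ctx l (cbv_tr_ctx L).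
Proof.
  revert l; induction L as [| [y P] L IH]; intros l HL;
    destruct l as [| [z p] l]; unfold approx_ctx in *; simpl.
  - split; constructor.
  - split; intro H; inversion H.
  - split; intro H; inversion H.
  - assert (HP : cbv_approx_agree P) by (apply (HL y); left; reflexivity).
    assert (IHl : approx_v_ctx l L <-> approx_ctx l (cbv_tr_ctx L))
      by (apply IH; intros; eapply HL; right; eassumption).
    split; intro H.
    + inversion H; subst; constructor; [split; [reflexivity | apply HP; assumption] |].
      apply IHl; assumption.
    + inversion H as [| yp yP l' L' [Hy Hp] Hl]; subst; simpl in Hy, Hp; subst.
      constructor; [apply HP | apply IHl]; assumption.
Qed.

Lemma approx_v_value_in_ctx V L P q l :
  (forall M', lsize M' <= lsize (lplug V L) -> cbv_approx_agree M') ->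
  cbv_tr V = BBang P ->
  approx_v (RBag [q]) V /\ approx_v_ctx l L <-> approx q P /\ approx_ctx l (cbv_tr_ctx L).
Proof.
  intros IH HP.
  destruct (lsize_lplug L V) as [HV HL].
  rewrite (IH V HV (RBag [q])), HP, approx_BBang, approx_v_ctx_cbv_tr_ctx
    by (intros y P' Hin; apply IH; specialize (HL _ _ Hin); lia).
  split; intros [Hq Hl]; split; try exact Hl.
  - destruct Hq as (ms & [= <-] & Hms); apply Hms; left; reflexivity.
  - exists [q]; split; [reflexivity |].
    intros n [<- | []]; exact Hq.
Qed.

Lemma cbv_approx_agree_LApp M N :
  (forall M', lsize M' < lsize (LApp M N) -> cbv_approx_agree M') -> cbv_approx_agree (LApp M N).
Proof.
  intro IH.
  assert (IHM : cbv_approx_agree M) by (apply IH; simpl; lia).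
  assert (IHN : cbv_approx_agree N) by (apply IH; simpl; lia).
  intro m; split; intro H.
  - inversion H as [| | m1 n1 M1 N1 Hm Hn Hnot | q n l V L N1 Hv Hq Hn Hl |]; subst.
    + apply peel_bang_cbv_tr_None in Hnot.
      simpl; rewrite Hnot.
      constructor; [constructor; apply IHM | apply IHN]; assumption.
    + destruct (cbv_tr_value V Hv) as [P HP].
      simpl; rewrite cbv_tr_lplug, peel_bang_bplug, HP; simpl.
      constructor; [| apply IHN; assumption].
      apply approx_bplug; exists q, l; split; [reflexivity |].
      apply (approx_v_value_in_ctx V L P q l); [| exact HP | split; assumption].
      intros M' HM'; apply IH; simpl; lia.
  - simpl in H; destruct (peel_bang (cbv_tr M)) as [[P L'] |] eqn:E.
    + destruct (peel_bang_cbv_tr_Some _ _ _ E) as (V & L & Hv & -> & HP & ->).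
      inversion H as [| | m1 n M1 N1 Hm Hn | | |]; subst.
      apply approx_bplug in Hm as (q & l & -> & Hq & Hl).
      assert (IHV : approx_v (RBag [q]) V /\ approx_v_ctx l L).
      { apply (approx_v_value_in_ctx V L P q l); [| exact HP | split; assumption].
        intros M' HM'; apply IH; simpl; lia. }
      destruct IHV as [HqV HlL].
      apply apv_app_ctx; auto; apply IHN; assumption.
    + inversion H as [| | m1 n M1 N1 Hm Hn | | |]; subst.
      inversion Hm as [| | | | m2 M2 Hm2 |]; subst.
      apply apv_app_der; [apply IHM | apply IHN | apply peel_bang_cbv_tr_None]; assumption.
Qed.

Lemma approx_v_cbv_tr M : cbv_approx_agree M.
Proof.
  induction M as [[x | x M | M N | M x N] IH] using (induction_ltof1 _ lsize);
    unfold ltof in IH; intro m; simpl.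
  - rewrite approx_BBang; split.
    + intro H; inversion H as [x0 ms Hms | | | |]; subst.
      exists ms; split; [reflexivity |].
      intros n Hn; rewrite (Hms n Hn); constructor.
    + intros (ms & -> & Hms); constructor.
      intros n Hn; specialize (Hms n Hn); inversion Hms; reflexivity.
  - rewrite approx_BBang; split.
    + intro H; inversion H as [| x0 ms M0 Hms | | |]; subst.
      exists ms; split; [reflexivity |].
      intros n Hn; destruct (Hms n Hn) as (n' & -> & Hn').
      constructor; apply IH; [simpl; lia | assumption].
    + intros (ms & -> & Hms); constructor.
      intros n Hn; specialize (Hms n Hn).
      inversion Hms as [| x1 n' M1 Hn' | | | |]; subst.
      exists n'; split; [reflexivity | apply IH; [simpl; lia | assumption]].
  - exact (cbv_approx_agree_LApp M N IH m).
  - assert (IHM : cbv_approx_agree M) by (apply IH; simpl; lia).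
    assert (IHN : cbv_approx_agree N) by (apply IH; simpl; lia).
    split; intro H; inversion H; subst; constructor;
      first [apply IHM | apply IHN]; assumption.
Qed.

Theorem mainTheorem9 :
  (forall M : lterm, forall m : rterm, Tn M m <-> T (cbn_tr M) m) /\
  (forall M : lterm, forall m : rterm, Tv M m <-> T (cbv_tr M) m).
Proof.
  split.
  - exact approx_n_cbn_tr.
  - exact approx_v_cbv_tr.
Qed.
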